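(* Let $n\ge1$ and $1\le k\le\frac{\ln n}{3}$. Then any deterministic algorithm that sorts $n$ elements in $k$ rounds in the rank query model uses, on its worst-case input, at least $\frac{k}{3e}\,n^{1+1/k}$ queries.
   Context: Rank query model: items $x_1,\ldots,x_n$ whose ranks form an unknown permutation of $\{1,\ldots,n\}$; a query asks ''How is $\mathrm{rank}(x_i)$ compared to $m$?'' with answer ''$<$'', ''$=$'' or ''$>$''; sorting means determining all ranks. An algorithm runs in $k$ rounds if in each of $k$ rounds it submits a set of queries chosen depending only on answers of earlier rounds, then receives all answers. *)

From mathcomp Require Import all_boot all_order all_algebra all_fingroup.
Set Implicit Arguments. Unset Strict Implicit. Unset Printing Implicit Defensive.
Import Order.TTheory GRing.Theory Num.Theory.

(* A query (i, m) asks "How is rank(x_i) compared to m?"; m is any integer. *)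
Definition query (n : nat) := ('I_n * int)%type.

Inductive answer := ALt | AEq | AGt.

(* The unknown ranks form a permutation: rank(x_i) = (s i) + 1 in {1..n}. *)
Definition rank (n : nat) (s : {perm 'I_n}) (i : 'I_n) : int := Posz (s i).+1.

Definition answer_of (n : nat) (s : {perm 'I_n}) (q : query n) : answer :=
  if (rank s q.1 < q.2)%R then ALt
  else if rank s q.1 == q.2 then AEq else AGt.

(* A deterministic k-round algorithm: given the transcript of all earlier
   rounds (each round = list of (query, answer) pairs), it chooses the set
   (a duplicate-free list) of queries of the next round. *)
Definition strategy (n : nat) := seq (seq (query n * answer)) -> seq (query n).

Fixpoint history (n : nat) (A : strategy n) (s : {perm 'I_n}) (r : nat)
  : seq (seq (query n * answer)) :=
  match r with
  | 0 => [::]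
  | r'.+1 => let h := history A s r' in
             rcons h [seq (q, answer_of s q) | q <- undup (A h)]
  end.

Definition num_queries (n : nat) (A : strategy n) (s : {perm 'I_n}) (k : nat) : nat :=
  \sum_(r < k) size (undup (A (history A s r))).

Definition sorts_in_rounds (n : nat) (A : strategy n) (k : nat) : Prop :=
  forall s1 s2 : {perm 'I_n}, history A s1 k = history A s2 k -> s1 = s2.

(* An algorithm sorting in k rounds must separate all n! permutations.  If a
   round asks c_i queries about item i, its answers only depend on where
   rank(x_i) falls among the c_i queried values, i.e. on one of
   \prod_i 2 (c_i + 1) signatures.  So for some input, n! is at most the
   product of these k * n factors over the k rounds, which by AM-GM is at most
   (2 (Q + k n) / (k n))^(k n), Q being the number of queries on that input.
   Put y = n^(1/k) / e >= e^2 >= 6.  If Q < k n y / 3, then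
   (2 (Q + k n))^(k n) < (k n y)^(k n) <= (k n)^(k n) (n/e)^n <= (k n)^(k n) n!,
   a contradiction. *)

From mathcomp Require Import all_boot all_order all_algebra all_fingroup zify.
From HB Require Import structures.
Set Implicit Arguments. Unset Strict Implicit. Unset Printing Implicit Defensive.
Import Order.TTheory GRing.Theory Num.Theory.

Definition answer_eqb (a b : answer) : bool :=
  match a, b with ALt, ALt | AEq, AEq | AGt, AGt => true | _, _ => false end.

Lemma answer_eqP : Equality.axiom answer_eqb.
Proof. by case; case; constructor. Qed.

HB.instance Definition _ := hasDecEq.Build answer answer_eqP.

Section CountLt.
Context {disp : Order.disp_t} {T : orderType disp}.

Lemma count_lt_split (V : seq T) (v w : T) : (v <= w)%O ->
  count (< w)%O V = count (< v)%O V + count (fun m => (v <= m < w)%O) V.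
Proof.
move=> le_vw; rewrite -count_predUI.
rewrite (@eq_count _ (predI _ _) pred0) ?count_pred0 ?addn0; last first.
  by move=> m /=; case: ltP => //= lt_mv; rewrite leNgt lt_mv.
apply: eq_count => m /=; case: (ltP m v) => //= lt_mv.
exact: lt_le_trans lt_mv le_vw.
Qed.

Lemma count_lt_mem_cmp (V : seq T) (v w : T) :
  count (< v)%O V = count (< w)%O V -> (v \in V) = (w \in V) ->
  {in V, forall m, (v < m)%O = (w < m)%O /\ (v == m) = (w == m)}.
Proof.
wlog lt_vw : v w / (v < w)%O.
  move=> gen cnt mem m Vm; case: (ltgtP v w) => [lt_vw|lt_wv|<-//].
    exact: gen.
  by have [] := gen w v lt_wv (esym cnt) (esym mem) m Vm.
move=> cnt mem.
have gap : {in V, forall m, ~~ (v <= m < w)%O}.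
  move=> m Vm; apply/negP => vmw.
  move: cnt; rewrite (count_lt_split V (ltW lt_vw)) -[LHS]addn0 => /eqP.
  by rewrite eqn_add2l eq_sym eqn0Ngt -has_count => /hasPn/(_ m Vm); rewrite vmw.
have wV : w \notin V.
  by apply/negP; rewrite -mem => /gap; rewrite lexx lt_vw.
move=> m Vm; have := gap m Vm; rewrite negb_and -ltNge -leNgt.
case/orP=> [lt_mv|le_wm].
  have lt_mw := lt_trans lt_mv lt_vw.
  by rewrite (lt_gtF lt_mv) (lt_gtF lt_mw) (gt_eqF lt_mv) (gt_eqF lt_mw).
have lt_wm : (w < m)%O.
  by rewrite lt_neqAle le_wm andbT; apply: contraNneq wV => ->.
have lt_vm := lt_trans lt_vw lt_wm.
by rewrite lt_wm lt_vm (lt_eqF lt_wm) (lt_eqF lt_vm).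
Qed.

End CountLt.

Section Signature.
Variables (n : nat) (Q : seq (query n)).

Definition qvals (i : 'I_n) : seq int := [seq q.2 | q <- Q & q.1 == i].

Definition signature_type := {dffun forall i : 'I_n, 'I_(size (qvals i)).+1 * bool}.

Definition signature (s : {perm 'I_n}) : signature_type :=
  [ffun i => (inord (count (< rank s i)%R (qvals i)), rank s i \in qvals i)].

Lemma card_signature_type :
  #|signature_type| = \prod_(i < n) ((size (qvals i)).+1 * 2).
Proof.
rewrite card_dep_ffun foldrE big_image /=.
by apply: eq_bigr => i _; rewrite card_prod card_ord card_bool.
Qed.

Lemma sum_size_qvals : \sum_(i < n) size (qvals i) = size Q.
Proof.
rewrite /qvals; under eq_bigr do rewrite size_map size_filter.
elim: Q => [|q Q' IH]; first by rewrite big1.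
rewrite big_split /= IH (bigD1 q.1) //= eqxx big1 // => i /negbTE.
by rewrite eq_sym => ->.
Qed.

Lemma signature_answers (s1 s2 : {perm 'I_n}) :
  signature s1 = signature s2 -> {in Q, answer_of s1 =1 answer_of s2}.
Proof.
move=> sig q Qq.
have := congr1 (fun f : signature_type => f q.1) sig; rewrite !ffunE.
case=> /(congr1 val) /=.
rewrite !inordK ?ltnS ?count_size // => cnt mem.
have qv : q.2 \in qvals q.1 by apply: map_f; rewrite mem_filter eqxx.
by rewrite /answer_of; have [-> ->] := count_lt_mem_cmp cnt mem qv.
Qed.

End Signature.

Lemma leq_AGM_nat (I : finType) (F : I -> nat) :
  (\prod_i F i) * #|I| ^ #|I| <= (\sum_i F i) ^ #|I|.
Proof.
have nneg i : i \in predT -> (0 <= (F i)%:R *+ #|I| :> int)%R by rewrite mulrn_wge0.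
have := (leif_AGM_scaled nneg).1.
rewrite -prod_nat_const -big_split -natr_sum -natrX -(ler_nat int) natr_prod.
by under eq_bigr do rewrite -mulrnA.
Qed.

Section Rounds.
Variables (n : nat) (A : strategy n) (k : nat).

Definition branching (h : seq (seq (query n * answer))) : nat :=
  #|signature_type (undup (A h))|.

Definition path_branching (s : {perm 'I_n}) (r : nat) : nat :=
  \prod_(r <= j < k) branching (history A s j).

Lemma branching_gt0 h : 0 < branching h.
Proof. by apply/card_gt0P; exists [ffun i => (ord0, false)]. Qed.

Lemma history_succ_signature (s1 s2 : {perm 'I_n}) r :
  history A s1 r = history A s2 r ->
  signature (undup (A (history A s1 r))) s1 = signature (undup (A (history A s1 r))) s2 ->
  history A s1 r.+1 = history A s2 r.+1.
Proof.
move=> eq_h /signature_answers eq_ans /=; rewrite -eq_h.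
by congr rcons; apply/eq_in_map => q /eq_ans ->.
Qed.

Hypothesis sortsA : sorts_in_rounds A k.

Lemma card_history_fiber d r h M : r + d = k ->
  (forall s, history A s r = h -> path_branching s r <= M) ->
  #|[pred s | history A s r == h]| <= M.
Proof.
elim: d r h M => [|d IH] r h M; rewrite ?addn0 => rdk bound.
  case: (pickP [pred s | history A s r == h]) => [s0 /eqP h_s0|none].
    apply: leq_trans (bound s0 h_s0).
    rewrite /path_branching big_geq ?rdk // -(cards1 s0); apply: subset_leq_card.
    apply/subsetP => s /eqP h_s; rewrite inE; apply/eqP/sortsA.
    by rewrite h_s -rdk h_s0.
  by rewrite (eq_card0 none).
set Q := undup (A h).
have lt_rk : r < k by rewrite -rdk addnS ltnS leq_addr.
have bound_succ s : history A s r = h -> path_branching s r.+1 <= M %/ branching h.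
  move=> h_s; rewrite leq_divRL ?branching_gt0 // mulnC.
  by have := bound s h_s; rewrite /path_branching big_ltn // h_s.
rewrite -sum1_card (partition_big (signature Q) xpredT) //=.
apply: (@leq_trans (\sum_(C : signature_type Q) M %/ branching h)).
  apply: leq_sum => C _.
  case: (pickP [pred s | (history A s r == h) && (signature Q s == C)]) => [s1|none].
    case/andP=> /eqP h_s1 /eqP sig_s1.
    have fiber_bound := IH r.+1 (history A s1 r.+1) (M %/ branching h).
    rewrite sum1_card; apply: leq_trans (fiber_bound _ _); last first.
    - by move=> s /= /rcons_inj [h_s _]; apply: bound_succ; rewrite h_s h_s1.
    - by rewrite addSnnS.
    apply: subset_leq_card; apply/subsetP => s /andP [/eqP h_s /eqP sig_s] /=.
    apply/eqP/history_succ_signature; rewrite h_s ?h_s1 //.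
    by rewrite -/Q sig_s sig_s1.
  by rewrite big_pred0.
by rewrite sum_nat_const mulnC leq_trunc_div.
Qed.

Lemma exists_fact_le_path_branching : exists s, n`! <= path_branching s 0.
Proof.
have [s _ max_s] := @arg_maxnP _ 1%g xpredT (path_branching^~ 0) isT.
exists s; have := @card_history_fiber k 0 [::] _ erefl (fun t _ => max_s t isT).
have all_hist0 : [pred t | history A t 0 == [::]] =i predT by [].
by rewrite (eq_card all_hist0) card_Sn.
Qed.

Lemma path_branching_AGM s :
  path_branching s 0 * (k * n) ^ (k * n) <= (2 * (num_queries A s k + k * n)) ^ (k * n).
Proof.
pose F (p : 'I_k * 'I_n) := (size (qvals (undup (A (history A s p.1))) p.2)).+1 * 2.
have prodF : path_branching s 0 = \prod_p F p.
  rewrite /path_branching big_mkord -(pair_bigA _ (fun j i => F (j, i))).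
  by apply: eq_bigr => j _; rewrite /branching card_signature_type.
have sumF : 2 * (num_queries A s k + k * n) = \sum_p F p.
  rewrite -(pair_bigA _ (fun j i => F (j, i))) -[k in k * n]card_ord -sum_nat_const.
  rewrite -big_split big_distrr; apply: eq_bigr => j _ /=.
  rewrite -sum_size_qvals -[n in _ + n]card_ord -sum1_card -big_split big_distrr.
  by apply: eq_bigr => i _; rewrite /= addn1 mulnC.
by have := leq_AGM_nat F; rewrite card_prod !card_ord -prodF -sumF.
Qed.

End Rounds.

From Stdlib Require Import Reals Lra.

Section RealBounds.
Local Open Scope R_scope.

Lemma exp_le a b : a <= b -> exp a <= exp b.
Proof. by case/Rle_lt_or_eq_dec => [/exp_increasing/Rlt_le|->]; [|apply: Rle_refl]. Qed.

Lemma exp_pow a m : exp a ^ m = exp (INR m * a).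
Proof. by rewrite -Rpower_pow ?/Rpower ?ln_exp //; apply: exp_pos. Qed.

Lemma pow_lt_pow_l a b (m : nat) : 0 <= a -> a < b -> (0 < m)%nat -> a ^ m < b ^ m.
Proof.
case: m => [//|m] a0 ab _ /=.
have : a ^ m <= b ^ m by apply: pow_incr; lra.
have := pow_le a m a0; have := pow_lt b m (Rle_lt_trans _ _ _ a0 ab).
nra.
Qed.

Lemma exp2_ge6 : 6 <= exp 2.
Proof.
have -> : 2 = INR 16 * / 8 by rewrite /=; lra.
rewrite -exp_pow; apply: Rle_trans (pow_incr (1 + / 8) _ 16 _).
  by rewrite /=; lra.
by split; [lra | apply: exp_ineq1_le].
Qed.

Lemma succ_pow_le_exp m : INR m.+1 ^ m <= exp 1 * INR m ^ m.
Proof.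
case: m => [|m]; first by rewrite /= !Rmult_1_r; have := exp_ineq1_le 1; lra.
have m0 : 0 < INR m.+1 by apply: lt_0_INR; lia.
have -> : INR m.+2 = INR m.+1 * (1 + / INR m.+1) by rewrite (S_INR m.+1); field; lra.
have -> : exp 1 = exp (/ INR m.+1) ^ m.+1 by rewrite exp_pow; f_equal; field; lra.
rewrite Rpow_mult_distr Rmult_comm; apply: Rmult_le_compat_r; first by apply: pow_le; lra.
by apply: pow_incr; split; [have := Rinv_0_lt_compat _ m0; lra | apply: exp_ineq1_le].
Qed.

Lemma pow_le_fact_mul_exp m : INR m ^ m <= INR m`! * exp (INR m).
Proof.
elim: m => [|m IH]; first by rewrite /= exp_0; lra.
rewrite factS mult_INR S_INR exp_plus -S_INR -tech_pow_Rmult.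
have m0 := pos_INR m.+1.
apply: Rle_trans (Rmult_le_compat_l _ _ _ m0 (succ_pow_le_exp m)) _.
rewrite [X in _ <= X](_ : _ = INR m.+1 * (exp 1 * (INR m`! * exp (INR m)))); last by ring.
by apply/Rmult_le_compat_l/Rmult_le_compat_l => //; apply/Rlt_le/exp_pos.
Qed.

Lemma INR_expn m e : INR (expn m e) = INR m ^ e.
Proof. by elim: e => [|e IH]; rewrite ?expnS ?mult_INR ?IH. Qed.

Lemma pow_lt_fact_of_query_lt (n k S : nat) :
  (1 <= n)%nat -> (1 <= k)%nat -> INR k <= ln (INR n) / 3 ->
  INR S < INR k / (3 * exp 1) * Rpower (INR n) (1 + / INR k) ->
  (2 * (INR S + INR k * INR n)) ^ (k * n) < INR n`! * (INR k * INR n) ^ (k * n).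
Proof.
move=> n1 k1 k_le S_lt.
have n0 : 0 < INR n by apply: lt_0_INR; lia.
have k0 : 1 <= INR k by apply: (le_INR 1); lia.
have kn0 : (0 < k * n)%nat by rewrite muln_gt0 n1 k1.
set N := INR k * INR n; have N0 : 0 < N by apply: Rmult_lt_0_compat; lra.
set y := exp (ln (INR n) / INR k - 1).
have ln_div_k : ln (INR n) / INR k * INR k = ln (INR n) by field; lra.
have y_ge6 : 6 <= y by apply: Rle_trans exp2_ge6 (exp_le _); nra.
have bound_eq : INR k / (3 * exp 1) * Rpower (INR n) (1 + / INR k) = N * y / 3.
  rewrite Rpower_plus Rpower_1 // /Rpower /y /Rminus exp_plus exp_Ropp /Rdiv.
  rewrite [ln _ * / _]Rmult_comm /N; field; exact: exp_neq_0.
have lin : 2 * (INR S + N) < N * y by nra.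
have y_pow : y ^ (k * n) <= INR n`!.
  have expo : INR (k * n) * (ln (INR n) / INR k - 1) <= INR n * ln (INR n) - INR n.
    rewrite mult_INR; nra.
  rewrite exp_pow; apply: Rle_trans (exp_le expo) _.
  rewrite /Rminus exp_plus exp_Ropp -[exp (INR n * _)]/(Rpower (INR n) (INR n)) Rpower_pow //.
  apply: (Rmult_le_reg_r (exp (INR n))); first exact: exp_pos.
  rewrite /Rdiv Rmult_assoc Rinv_l ?Rmult_1_r; last exact: exp_neq_0.
  exact: pow_le_fact_mul_exp.
apply: Rlt_le_trans (pow_lt_pow_l _ lin kn0) _; first by have := pos_INR S; lra.
rewrite Rpow_mult_distr [INR n`! * _]Rmult_comm; apply: Rmult_le_compat_l y_pow.
by apply: pow_le; lra.
Qed.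

End RealBounds.

Theorem corollary1 (n k : nat) (A : strategy n) :
  (1 <= n)%N -> (1 <= k)%N -> (INR k <= ln (INR n) / 3)%R ->
  sorts_in_rounds A k ->
  exists s : {perm 'I_n},
    (INR k / (3 * exp 1) * Rpower (INR n) (1 + / INR k)
       <= INR (num_queries A s k))%R.
Proof.
move=> n1 k1 k_le sortsA.
have [s fact_le] := exists_fact_le_path_branching sortsA.
exists s; apply: Rnot_lt_le => /(pow_lt_fact_of_query_lt n1 k1 k_le).
have := leq_trans (leq_mul fact_le (leqnn _)) (path_branching_AGM A k s).
move/ssrnat.leP/le_INR; rewrite !mult_INR !INR_expn !mult_INR plus_INR mult_INR.
rewrite (_ : INR 2 = 2%R); last by rewrite /=; lra.
lra.
Qed.
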